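(* Let $r\geq 2$ and $0\leq \alpha \leq 1-\frac{1}{r}$. Let $G$ be a graph of order $n\ge 2$, let $\mathbf{x}=(x_{1}, \dots, x_{n})$ be a non-negative unit eigenvector of $A_{\alpha}(G)$ corresponding to $\lambda_{\alpha}(G)$, and let $w\in V(G)$ satisfy $x_{w}=\min \{x_{1}, \dots, x_{n}\}$. Then $$\lambda_{\alpha}(G-w)\geq \lambda_{\alpha}(G)\frac{1-2x^2_{w}}{1-x^2_{w}}-\alpha\frac{1-nx^2_{w}}{1-x^2_{w}}.$$
   Context: $A_\alpha(G)=\alpha D(G)+(1-\alpha)A(G)$, where $A(G)$ is the adjacency matrix and $D(G)$ the diagonal degree matrix of $G$; $\lambda_\alpha(G)$ is its largest eigenvalue. $G-w$ is the graph obtained by deleting vertex $w$ and its incident edges. *)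

From HB Require Import structures.
From mathcomp Require Import all_boot all_order all_algebra.
From mathcomp Require Import reals.
Set Implicit Arguments. Unset Strict Implicit. Unset Printing Implicit Defensive.
Import Order.TTheory GRing.Theory Num.Theory.
Local Open Scope ring_scope.

Definition simple_graph (n : nat) (adj : rel 'I_n) : Prop :=
  (forall i j, adj i j = adj j i) /\ (forall i, ~~ adj i i).

Definition deg (n : nat) (adj : rel 'I_n) (i : 'I_n) : nat := #|[set j | adj i j]|.

Definition adjmx (R : nzRingType) (n : nat) (adj : rel 'I_n) : 'M[R]_n :=
  \matrix_(i, j) (adj i j)%:R.

Definition degmx (R : nzRingType) (n : nat) (adj : rel 'I_n) : 'M[R]_n :=
  \matrix_(i, j) (if i == j then (deg adj i)%:R else 0).

Definition Aalpha (R : nzRingType) (n : nat) (adj : rel 'I_n) (alpha : R) : 'M[R]_n :=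
  alpha *: degmx R adj + (1 - alpha) *: adjmx R adj.

Definition largest_eigenvalue (R : realFieldType) (n : nat) (A : 'M[R]_n) (l : R) : Prop :=
  eigenvalue A l /\ (forall mu, eigenvalue A mu -> mu <= l).

(* G - w : delete vertex w; vertices of G - w are 'I_n.-1, identified with
   the vertices of G other than w through lift w. *)
Definition del_vertex (n : nat) (adj : rel 'I_n) (w : 'I_n) : rel 'I_n.-1 :=
  fun i j => adj (lift w i) (lift w j).

(* Restricting x to V(G) - w gives a test vector x' for the Rayleigh quotient of
   the symmetric matrix A_alpha(G - w), so lambda_alpha(G - w) (1 - x_w^2) is at
   least x'^T A_alpha(G - w) x'.  Using the eigen-equation at w, this quadratic
   form is lambda (1 - 2 x_w^2) - alpha (sum_(i ~ w) x_i^2 - d_w x_w^2), and as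
   each of the n - d_w non-neighbours of w (w included) has x_i^2 >= x_w^2,
   sum_(i ~ w) x_i^2 - d_w x_w^2 <= 1 - n x_w^2. *)

From HB Require Import structures.
From mathcomp Require Import all_boot all_order all_algebra.
From mathcomp Require Import reals.
From mathcomp Require Import ring lra.
From mathcomp Require Import complex.
Set Implicit Arguments. Unset Strict Implicit. Unset Printing Implicit Defensive.
Import Order.TTheory GRing.Theory Num.Theory.
Local Open Scope ring_scope.
Local Open Scope sesquilinear_scope.

Section Spectral.
Variable C : numClosedFieldType.

Lemma eigenvalue_spectral_diag n (A : 'M[C]_n) k :
  A \is normalmx -> eigenvalue A (spectral_diag A 0 k).
Proof.
have P_unit := spectral_unit A.
move=> /orthomx_spectralP; set P := spectralmx A; set d := spectral_diag A.
move=> A_eq; apply/eigenvalueP; exists (row k P).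
  rewrite rowE {1}A_eq !mulmxA mulmxK //.
  by rewrite -(rowE k (diag_mx _)) row_diag_mx -scalemxAl -rowE.
apply/eqP => /(congr1 (mulmx^~ (invmx P))).
rewrite rowE mulmxK // mul0mx => /matrixP /(_ 0 k) /eqP.
by rewrite !mxE !eqxx oner_eq0.
Qed.

Lemma normalmx_quad_le n (A : 'M[C]_n) (mu : C) (u : 'rV_n) :
  A \is normalmx -> (forall k, spectral_diag A 0 k <= mu) ->
  (u *m A *m u^t*) 0 0 <= mu * (u *m u^t*) 0 0.
Proof.
have P_unitary := spectral_unitarymx A.
move=> /orthomx_spectralP; set P := spectralmx A; set d := spectral_diag A.
move=> A_eq d_le; pose z := u *m P^t*.
have zC : z^t* = P *m u^t* by rewrite /z trmx_mul map_mxM trmxCK.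
have -> : u *m A *m u^t* = z *m diag_mx d *m z^t*.
  by rewrite zC {1}A_eq invmx_unitary // /z !mulmxA.
have -> : u *m u^t* = z *m z^t*.
  rewrite zC /z -mulmxA (mulmxA _ P) -invmx_unitary //.
  by rewrite mulVmx ?mul1mx // unitarymx_unit.
rewrite mul_mx_diag !mxE mulr_sumr; apply: ler_sum => k _; rewrite !mxE.
by rewrite mulrAC mulrC ler_wpM2r // -normCK exprn_ge0.
Qed.

End Spectral.

(* The spectral theorem is only available over a numClosedFieldType, so the
   Rayleigh bound for real symmetric matrices is obtained through complex R. *)
Section RealSymmetric.
Variable R : rcfType.
Local Notation toC := (real_complex R).

Lemma eigenvalue_real_complex n (B : 'M[R]_n) (a : R) :
  eigenvalue (map_mx toC B) (toC a) -> eigenvalue B a.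
Proof. by rewrite !eigenvalue_root_char -map_char_poly fmorph_root. Qed.

Lemma symmetric_quad_le n (B : 'M[R]_n) (mu : R) (x : 'cV_n) :
  B^T = B -> (forall a, eigenvalue B a -> a <= mu) ->
  (x^T *m B *m x) 0 0 <= mu * (x^T *m x) 0 0.
Proof.
move=> B_sym mu_max.
have B_herm : map_mx toC B \is hermsymmx.
  apply: realsym_hermsym.
    by apply/is_hermitianmxP; rewrite expr0 scale1r map_mx_id // map_trmx B_sym.
  by apply/mxOverP => i j; rewrite mxE; apply/complex_realP; exists (B i j).
have B_normal := hermitian_normalmx B_herm.
have d_le k : spectral_diag (map_mx toC B) 0 k <= toC mu.
  have /complex_realP [a a_eq] : spectral_diag (map_mx toC B) 0 k \is Num.real.
    exact: (mxOverP (hermitian_spectral_diag_real B_herm)).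
  have := eigenvalue_spectral_diag k B_normal.
  by rewrite a_eq lecR => /eigenvalue_real_complex; apply: mu_max.
have xC : (map_mx toC x^T)^t* = map_mx toC x.
  apply/matrixP => i j; rewrite !mxE.
  by apply: conj_Creal; apply/complex_realP; eexists.
have := normalmx_quad_le (map_mx toC x^T) B_normal d_le.
by rewrite xC -!map_mxM !mxE -rmorphM lecR.
Qed.

End RealSymmetric.

Lemma sum_lift (V : zmodType) n (w : 'I_n) (F : 'I_n -> V) :
  \sum_(i < n.-1) F (lift w i) = \sum_i F i - F w.
Proof. by rewrite [in RHS](bigD1_ord w) //= addrC addrK. Qed.

Lemma natr_card (R : nzSemiRingType) n (a : pred 'I_n) :
  #|a|%:R = \sum_i ((a i)%:R : R).
Proof.
rewrite -sum1_card natr_sum big_mkcond /=; apply: eq_bigr => i _.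
by rewrite unfold_in; case: (a i).
Qed.

Lemma quad_formE (R : comNzRingType) n (B : 'M[R]_n) (y : 'cV_n) :
  (y^T *m B *m y) 0 0 = \sum_i y i 0 * (B *m y) i 0.
Proof. by rewrite -mulmxA mxE; apply: eq_bigr => i _; rewrite mxE. Qed.

Section Aalpha.
Variables (R : comNzRingType) (n : nat) (adj : rel 'I_n) (alpha : R).

Lemma natr_deg i : (deg adj i)%:R = \sum_j ((adj i j)%:R : R).
Proof. by rewrite /deg cardsE natr_card. Qed.

Lemma Aalpha_mulE (x : 'cV[R]_n) i :
  (Aalpha adj alpha *m x) i 0 =
  alpha * (deg adj i)%:R * x i 0 + (1 - alpha) * \sum_j (adj i j)%:R * x j 0.
Proof.
rewrite /Aalpha /degmx /adjmx !mxE.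
under eq_bigr => j _ do rewrite !mxE mulrDl.
rewrite big_split /= (bigD1 i) //= eqxx big1 ?addr0; last first.
  by move=> j /negbTE; rewrite eq_sym => ->; rewrite mulr0 mul0r.
by rewrite mulr_sumr; congr (_ + _); apply: eq_bigr => j _; rewrite mulrA.
Qed.

Lemma trmx_Aalpha : (forall i j, adj i j = adj j i) ->
  (Aalpha adj alpha)^T = Aalpha adj alpha.
Proof.
move=> adj_sym; apply/matrixP => i j.
rewrite /Aalpha /degmx /adjmx !mxE adj_sym.
by case: eqVneq => [->|]; rewrite ?eqxx // eq_sym => /negbTE ->.
Qed.

End Aalpha.

Section DelVertex.
Variables (R : comNzRingType) (n : nat) (adj : rel 'I_n) (alpha : R) (w : 'I_n).

Lemma Aalpha_del_vertex_mulE (x : 'cV[R]_n) k :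
  (Aalpha (del_vertex adj w) alpha *m row' w x) k 0 =
  (Aalpha adj alpha *m x) (lift w k) 0
  - (adj (lift w k) w)%:R * (alpha * x (lift w k) 0 + (1 - alpha) * x w 0).
Proof.
rewrite !Aalpha_mulE !natr_deg /del_vertex.
under [\sum_j _ * row' w x j 0]eq_bigr do rewrite /row' mxE.
rewrite (sum_lift w (fun j => (adj (lift w k) j)%:R : R)).
rewrite (sum_lift w (fun j => (adj (lift w k) j)%:R * x j 0)).
rewrite [row' w x k 0]mxE.
ring.
Qed.

Lemma quad_del_vertex (x : 'cV[R]_n) : ~~ adj w w ->
  ((row' w x)^T *m Aalpha (del_vertex adj w) alpha *m row' w x) 0 0 =
  (x^T *m Aalpha adj alpha *m x) 0 0 - x w 0 * (Aalpha adj alpha *m x) w 0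
  - \sum_i x i 0 * ((adj i w)%:R * (alpha * x i 0 + (1 - alpha) * x w 0)).
Proof.
move=> /negbTE adj_ww; rewrite !quad_formE.
under eq_bigr do rewrite Aalpha_del_vertex_mulE mxE.
rewrite (sum_lift w (fun i => x i 0 * ((Aalpha adj alpha *m x) i 0
  - (adj i w)%:R * (alpha * x i 0 + (1 - alpha) * x w 0)))).
rewrite adj_ww mul0r subr0.
under eq_bigr do rewrite mulrBr.
by rewrite sumrB addrAC.
Qed.

Lemma quad_del_vertex_eigen (x : 'cV[R]_n) (lam : R) :
  simple_graph adj -> Aalpha adj alpha *m x = lam *: x -> \sum_i x i 0 ^+ 2 = 1 ->
  ((row' w x)^T *m Aalpha (del_vertex adj w) alpha *m row' w x) 0 0 =
  lam * (1 - 2 * x w 0 ^+ 2)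
  - alpha * (\sum_i (adj w i)%:R * x i 0 ^+ 2 - (deg adj w)%:R * x w 0 ^+ 2).
Proof.
move=> [adj_sym adj_irr] x_eig x_norm.
have eigE i : (Aalpha adj alpha *m x) i 0 = lam * x i 0 by rewrite x_eig mxE.
rewrite quad_del_vertex // quad_formE eigE.
have -> : \sum_i x i 0 * (Aalpha adj alpha *m x) i 0 = lam.
  by rewrite -[RHS]mulr1 -x_norm mulr_sumr; apply: eq_bigr => i _; rewrite eigE; ring.
have -> : \sum_i x i 0 * ((adj i w)%:R * (alpha * x i 0 + (1 - alpha) * x w 0)) =
    alpha * \sum_i (adj w i)%:R * x i 0 ^+ 2
    + x w 0 * ((1 - alpha) * \sum_i (adj w i)%:R * x i 0).
  by rewrite !mulr_sumr -big_split /=; apply: eq_bigr => i _; rewrite adj_sym; ring.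
have -> : (1 - alpha) * \sum_j (adj w j)%:R * x j 0 =
    lam * x w 0 - alpha * (deg adj w)%:R * x w 0.
  by rewrite -eigE Aalpha_mulE; ring.
ring.
Qed.

End DelVertex.

Lemma sum_mask_sqr_le (R : numDomainType) n (a : pred 'I_n) (y : 'I_n -> R) t :
  0 <= t -> (forall i, t <= y i) ->
  \sum_i (a i)%:R * y i ^+ 2 - #|a|%:R * t ^+ 2 <= \sum_i y i ^+ 2 - n%:R * t ^+ 2.
Proof.
move=> t_ge0 t_le.
have nE : n%:R = \sum_(i < n) (1 : R) by rewrite sumr_const card_ord.
rewrite natr_card nE !mulr_suml -!sumrB; apply: ler_sum => i _.
case: (a i); rewrite ?mul1r ?mul0r ?subr0 // subr_ge0.
by rewrite ler_pXn2r ?nnegrE ?(le_trans t_ge0 (t_le i)).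
Qed.

Theorem lemma3p3 (R : realType) (r : nat) (alpha : R) (n : nat) (adj : rel 'I_n)
    (lam lamw : R) (x : 'cV[R]_n) (w : 'I_n) :
  (2 <= r)%N ->
  0 <= alpha -> alpha <= 1 - 1 / r%:R ->
  (2 <= n)%N ->
  simple_graph adj ->
  largest_eigenvalue (Aalpha adj alpha) lam ->
  (forall i, 0 <= x i 0) ->
  \sum_i (x i 0) ^+ 2 = 1 ->
  Aalpha adj alpha *m x = lam *: x ->
  (forall i, x w 0 <= x i 0) ->
  largest_eigenvalue (Aalpha (del_vertex adj w) alpha) lamw ->
  lamw >= lam * (1 - 2 * (x w 0) ^+ 2) / (1 - (x w 0) ^+ 2)
          - alpha * (1 - n%:R * (x w 0) ^+ 2) / (1 - (x w 0) ^+ 2).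
Proof.
move=> _ alpha_ge0 _ n_ge2 G _ x_ge0 x_norm x_eig x_min [_ lamw_max].
set t := x w 0.
have t_ge0 : 0 <= t := x_ge0 w.
have mass := sum_mask_sqr_le (adj w) t_ge0 x_min; rewrite x_norm in mass.
have nt2_le1 : n%:R * t ^+ 2 <= 1.
  have := sum_mask_sqr_le pred0 t_ge0 x_min.
  by rewrite card0 big1 => [|i _]; rewrite ?mul0r // x_norm; lra.
have t2_lt1 : t ^+ 2 < 1.
  have : 2%:R <= n%:R :> R by rewrite ler_nat.
  have := sqr_ge0 t; nra.
have del_sym i j : del_vertex adj w i j = del_vertex adj w j i.
  by rewrite /del_vertex G.1.
have := symmetric_quad_le (row' w x) (trmx_Aalpha alpha del_sym) lamw_max.
have -> : ((row' w x)^T *m row' w x) 0 0 = 1 - t ^+ 2.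
  rewrite mxE -x_norm -(sum_lift w (fun i => x i 0 ^+ 2)).
  by apply: eq_bigr => k _; rewrite !mxE expr2.
rewrite (quad_del_vertex_eigen w G x_eig x_norm) /deg cardsE -/t => lamw_ge.
rewrite -mulrBl ler_pdivrMr ?subr_gt0 //; apply: le_trans lamw_ge.
by rewrite lerD2l lerN2 ler_wpM2l.
Qed.
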